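(* Let $\omega_1,\dots,\omega_4$ be a basis of $(\mathbb C^4)^\ast$ and set $\Omega_1=\omega_1\wedge\omega_2$, $\Omega_2=\omega_1\wedge\omega_3$, $\Omega_3=\omega_1\wedge\omega_4$, $\Omega_4=\omega_2\wedge\omega_3$, $\Omega_5=-\omega_2\wedge\omega_4$, $\Omega_6=\omega_3\wedge\omega_4$. For $a\in\mathbb C$ the $(2,2)$-form $$\alpha_a=\sum_{j=1}^6\Omega_j\wedge\bar\Omega_j+a\,\Omega_1\wedge\bar\Omega_6+\bar a\,\Omega_6\wedge\bar\Omega_1$$ is positive if and only if $|a|\leq 2$.
   Context: Forms are constant-coefficient forms on $\mathbb C^n$. A $(p,p)$-form $\alpha$ in $\mathbb C^n$ is called positive if for all $(1,0)$-forms $\gamma_1,\dots,\gamma_{n-p}\in(\mathbb C^n)^\ast$ one has $\alpha\wedge i\gamma_1\wedge\bar\gamma_1\wedge\dots\wedge i\gamma_{n-p}\wedge\bar\gamma_{n-p}\geq 0$, meaning this $(n,n)$-form is a nonnegative real multiple of the standard volume form $idz_1\wedge d\bar z_1\wedge\dots\wedge idz_n\wedge d\bar z_n$. *)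

From HB Require Import structures.
From mathcomp Require Import all_boot all_order all_algebra.
From mathcomp Require Import complex.
From mathcomp Require Import reals.
Set Implicit Arguments. Unset Strict Implicit. Unset Printing Implicit Defensive.
Import Order.TTheory GRing.Theory Num.Theory.
Local Open Scope ring_scope.

(* Generators of the exterior algebra of (C^4)^* (+) conj:
   index k < 4 stands for dz_(k+1), index 4+k stands for dzbar_(k+1).
   A form is given by its coefficients on the basic monomials
   e_S = e_{s1} /\ ... /\ e_{sm}  (s1 < ... < sm, S = {s1,...,sm}). *)
Notation form C := {ffun {set 'I_8} -> C}.

Definition shuffle_sign (C : nzRingType) (A B : {set 'I_8}) : C :=
  (-1) ^+ #|[set p : 'I_8 * 'I_8 | [&& p.1 \in A, p.2 \in B & (p.2 < p.1)%N]]|.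

Definition wedge (C : nzRingType) (f g : form C) : form C :=
  [ffun S : {set 'I_8} =>
     \sum_(A : {set 'I_8} | A \subset S)
        shuffle_sign C A (S :\: A) * f A * g (S :\: A)].

Notation "f /\\ g" := (wedge f g) (at level 40, left associativity).

Definition fscale (C : nzRingType) (c : C) (f : form C) : form C :=
  [ffun S => c * f S].
Notation "c *f f" := (fscale c f) (at level 40).

Definition mono (C : nzRingType) (S : {set 'I_8}) : form C :=
  [ffun T => (T == S)%:R].

Definition dz (C : nzRingType) (k : 'I_4) : form C := mono C [set inord k].
Definition dzb (C : nzRingType) (k : 'I_4) : form C := mono C [set inord (k + 4)%N].

Definition hol (C : numClosedFieldType) (v : 'rV[C]_4) : form C :=
  \sum_(k < 4) v 0 k *f dz C k.
Definition ahol (C : numClosedFieldType) (v : 'rV[C]_4) : form C :=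
  \sum_(k < 4) (v 0 k)^* *f dzb C k.

Definition idzdzb (C : numClosedFieldType) (k : 'I_4) : form C :=
  'i *f (dz C k /\\ dzb C k).
Definition volume (C : numClosedFieldType) : form C :=
  idzdzb C 0 /\\ idzdzb C 1 /\\ idzdzb C 2 /\\ idzdzb C 3.

(* positivity of a (2,2)-form on C^4 (n = 4, p = 2, n - p = 2) *)
Definition positive22 (C : numClosedFieldType) (alpha : form C) : Prop :=
  forall g1 g2 : 'rV[C]_4,
    exists c : C, 0 <= c /\
      alpha /\\ ('i *f (hol g1 /\\ ahol g1)) /\\ ('i *f (hol g2 /\\ ahol g2))
      = c *f volume C.

Definition alpha_a (R : realType) (w : 'M[R[i]]_4) (a : R[i]) : form R[i] :=
  let om k := row k w in
  let Om j := match j with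
              | 0%N => hol (om 0) /\\ hol (om 1)
              | 1%N => hol (om 0) /\\ hol (om 2)
              | 2%N => hol (om 0) /\\ hol (om 3)
              | 3%N => hol (om 1) /\\ hol (om 2)
              | 4%N => - (hol (om 1) /\\ hol (om 3))
              | _ => hol (om 2) /\\ hol (om 3) end in
  let Omb j := match j with
              | 0%N => ahol (om 0) /\\ ahol (om 1)
              | 1%N => ahol (om 0) /\\ ahol (om 2)
              | 2%N => ahol (om 0) /\\ ahol (om 3)
              | 3%N => ahol (om 1) /\\ ahol (om 2)
              | 4%N => - (ahol (om 1) /\\ ahol (om 3))
              | _ => ahol (om 2) /\\ ahol (om 3) end in
  \sum_(j < 6) (Om j /\\ Omb j)
  + a *f (Om 0%N /\\ Omb 5%N) + a^* *f (Om 5%N /\\ Omb 0%N).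

From Pilot Require Import Defs.
From HB Require Import structures.
From mathcomp Require Import all_boot all_order all_algebra.
From mathcomp Require Import complex reals ring zify.
Import Order.TTheory GRing.Theory Num.Theory.
(* [form] is also a constant of mathcomp's sesquilinear library. *)
Import Defs.
Set Implicit Arguments. Unset Strict Implicit. Unset Printing Implicit Defensive.
Local Open Scope ring_scope.

(* Let P = g1 /\ g2 for the (1,0)-forms g1, g2 of the test.  Since i g /\ conj g
   is a 2-form, the test form i g1 /\ conj g1 /\ i g2 /\ conj g2 equals
   P /\ conj P.  In the basis Omega_j the coordinates p_j of P are the 2x2 minors
   of the coordinates of g1, g2 in the basis omega_k, and Omega_j /\ P is p_j times
   omega_1 /\ ... /\ omega_4 for a suitable numbering.  Hence
     alpha_a /\ P /\ conj P
       = (sum_j |p_j|^2 + a p_0 conj(p_5) + conj(a) p_5 conj(p_0)) |det w|^2 vol.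
   The Pluecker relation p_0 p_5 + p_1 p_4 + p_2 p_3 = 0 gives
   |p_0 p_5| <= |p_1||p_4| + |p_2||p_3|, so for |a| <= 2 the bracket is at least
   sum_j |p_j|^2 - 2 (|p_0||p_5| + |p_1||p_4| + |p_2||p_3|) >= 0.  Conversely,
   g1 = (2, 0, -conj a, 0) and g2 = (0, 1, 0, 1) make the bracket 8 - 2|a|^2. *)

Definition inversions (A B : {set 'I_8}) :=
  [set p : 'I_8 * 'I_8 | [&& p.1 \in A, p.2 \in B & (p.2 < p.1)%N]].

Section ExteriorAlgebra.
Variable C : numDomainType.
Implicit Types (c : C) (f g h u v : form C) (A B D S T : {set 'I_8}).

Lemma scalefE c f S : (c *f f) S = c * f S. Proof. by rewrite ffunE. Qed.
Lemma monoE S T : mono C S T = (T == S)%:R. Proof. by rewrite ffunE. Qed.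
Lemma wedgeE f g S : (f /\\ g) S =
  \sum_(A : {set 'I_8} | A \subset S) shuffle_sign C A (S :\: A) * f A * g (S :\: A).
Proof. by rewrite ffunE. Qed.

Lemma scalefA c1 c2 f : c1 *f (c2 *f f) = (c1 * c2) *f f.
Proof. by apply/ffunP => S; rewrite !ffunE mulrA. Qed.
Lemma scale1f f : 1 *f f = f.
Proof. by apply/ffunP => S; rewrite ffunE mul1r. Qed.
Lemma scale0f f : 0 *f f = 0.
Proof. by apply/ffunP => S; rewrite !ffunE mul0r. Qed.
Lemma scalef0 c : c *f 0 = 0 :> form C.
Proof. by apply/ffunP => S; rewrite !ffunE mulr0. Qed.
Lemma scaleNf c f : (- c) *f f = - (c *f f).
Proof. by apply/ffunP => S; rewrite !ffunE mulNr. Qed.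
Lemma scalefDl c1 c2 f : (c1 + c2) *f f = c1 *f f + c2 *f f.
Proof. by apply/ffunP => S; rewrite !ffunE mulrDl. Qed.
Lemma scalef_sumr c I (r : seq I) (P : pred I) (F : I -> form C) :
  c *f (\sum_(i <- r | P i) F i) = \sum_(i <- r | P i) c *f F i.
Proof.
by apply/ffunP => S; rewrite ffunE !sum_ffunE mulr_sumr; apply: eq_bigr => i _; rewrite ffunE.
Qed.
Lemma scalef_suml I (r : seq I) (P : pred I) (c : I -> C) f :
  (\sum_(i <- r | P i) c i) *f f = \sum_(i <- r | P i) c i *f f.
Proof.
by apply/ffunP => S; rewrite ffunE !sum_ffunE mulr_suml; apply: eq_bigr => i _; rewrite ffunE.
Qed.

Lemma scalef_injl f : f != 0 -> injective (fun c => c *f f).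
Proof.
move=> nf c1 c2 E; apply/eqP; apply: contraNT nf => nc; apply/eqP/ffunP => S.
move/ffunP/(_ S): E; rewrite !ffunE => /eqP.
by rewrite -subr_eq0 -mulrBl mulf_eq0 subr_eq0 (negbTE nc) => /eqP.
Qed.

Lemma wedgeDl f g h : (f + g) /\\ h = f /\\ h + g /\\ h.
Proof.
apply/ffunP => S; rewrite !ffunE -big_split; apply: eq_bigr => A _.
by rewrite ffunE mulrDr mulrDl.
Qed.
Lemma wedgeDr f g h : h /\\ (f + g) = h /\\ f + h /\\ g.
Proof.
apply/ffunP => S; rewrite !ffunE -big_split; apply: eq_bigr => A _.
by rewrite ffunE mulrDr.
Qed.
Lemma wedgeZl c f g : (c *f f) /\\ g = c *f (f /\\ g).
Proof.
apply/ffunP => S; rewrite !ffunE mulr_sumr; apply: eq_bigr => A _.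
by rewrite ffunE; ring.
Qed.
Lemma wedgeZr c f g : f /\\ (c *f g) = c *f (f /\\ g).
Proof.
apply/ffunP => S; rewrite !ffunE mulr_sumr; apply: eq_bigr => A _.
by rewrite ffunE; ring.
Qed.
Lemma wedge0l f : 0 /\\ f = 0.
Proof. by rewrite -{1}(scale0f 0) wedgeZl scale0f. Qed.
Lemma wedge0r f : f /\\ 0 = 0.
Proof. by rewrite -{1}(scale0f 0) wedgeZr scale0f. Qed.
Lemma wedgeNl f g : (- f) /\\ g = - (f /\\ g).
Proof.
apply/ffunP => S; rewrite !ffunE -sumrN; apply: eq_bigr => A _.
by rewrite ffunE mulrN mulNr.
Qed.
Lemma wedgeNr f g : f /\\ (- g) = - (f /\\ g).
Proof.
apply/ffunP => S; rewrite !ffunE -sumrN; apply: eq_bigr => A _.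
by rewrite ffunE mulrN.
Qed.
Lemma wedge_suml I (r : seq I) (P : pred I) (F : I -> form C) g :
  (\sum_(i <- r | P i) F i) /\\ g = \sum_(i <- r | P i) (F i /\\ g).
Proof. by elim/big_rec2: _ => [|i f1 f2 _ <-]; rewrite ?wedge0l ?wedgeDl. Qed.
Lemma wedge_sumr I (r : seq I) (P : pred I) (F : I -> form C) g :
  g /\\ (\sum_(i <- r | P i) F i) = \sum_(i <- r | P i) (g /\\ F i).
Proof. by elim/big_rec2: _ => [|i f1 f2 _ <-]; rewrite ?wedge0r ?wedgeDr. Qed.

Lemma form_expand f : f = \sum_S f S *f mono C S.
Proof.
apply/ffunP => T; rewrite sum_ffunE (bigD1 T) //= scalefE monoE eqxx mulr1.
by rewrite big1 ?addr0 // => S /negbTE nST; rewrite scalefE monoE eq_sym nST mulr0.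
Qed.

Lemma shuffle_signE A B : shuffle_sign C A B = (-1) ^+ #|inversions A B|.
Proof. by []. Qed.

Lemma shuffle_signUl A B D : [disjoint A & B] ->
  shuffle_sign C (A :|: B) D = shuffle_sign C A D * shuffle_sign C B D.
Proof.
move=> dAB; rewrite !shuffle_signE -exprD -cardsUI.
have -> : inversions A D :&: inversions B D = set0.
  apply/setP => p; rewrite !inE; apply/negbTE.
  by apply/negP => /andP[/and3P[pA _ _] /and3P[pB _ _]]; rewrite (disjointFr dAB pA) in pB.
have -> // : inversions (A :|: B) D = inversions A D :|: inversions B D.
  apply/setP => p; rewrite !inE.
  by case: (p.1 \in A); case: (p.1 \in B); case: (p.2 \in D); case: (p.2 < p.1)%N.
by rewrite cards0 addn0.
Qed.

Lemma shuffle_signUr A B D : [disjoint B & D] ->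
  shuffle_sign C A (B :|: D) = shuffle_sign C A B * shuffle_sign C A D.
Proof.
move=> dBD; rewrite !shuffle_signE -exprD -cardsUI.
have -> : inversions A B :&: inversions A D = set0.
  apply/setP => p; rewrite !inE; apply/negbTE.
  by apply/negP => /andP[/and3P[_ pB _] /and3P[_ pD _]]; rewrite (disjointFr dBD pB) in pD.
have -> // : inversions A (B :|: D) = inversions A B :|: inversions A D.
  apply/setP => p; rewrite !inE.
  by case: (p.1 \in A); case: (p.2 \in B); case: (p.2 \in D); case: (p.2 < p.1)%N.
by rewrite cards0 addn0.
Qed.

(* Each pair in A x B is an inversion of exactly one of the two shuffles. *)
Lemma shuffle_sign_swap A B : [disjoint A & B] ->
  shuffle_sign C A B * shuffle_sign C B A = (-1) ^+ (#|A| * #|B|).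
Proof.
move=> dAB; rewrite !shuffle_signE -exprD -cardsX.
have -> : inversions B A = swap_pair @^-1:
    [set p : 'I_8 * 'I_8 | [&& p.1 \in A, p.2 \in B & (p.1 < p.2)%N]].
  by apply/setP => -[x y]; rewrite !inE /=; case: (x \in B); case: (y \in A).
rewrite card_preimset; last exact: (can_inj swap_pairK).
rewrite -cardsUI; set Q := [set p | _].
have -> : inversions A B :&: Q = set0.
  apply/setP => p; rewrite !inE; apply/negbTE; apply/negP.
  by move=> /andP[/and3P[_ _ h1] /and3P[_ _ h2]]; move: (ltn_trans h1 h2); rewrite ltnn.
have -> : inversions A B :|: Q = setX A B.
  apply/setP => -[x y]; rewrite !inE /=.
  case xA: (x \in A); case yB: (y \in B) => //=.
  have : x != y by apply: contraTneq yB => <-; rewrite (disjointFr dAB xA).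
  by rewrite -val_eqE neq_ltn orbC.
by rewrite cards0 addn0.
Qed.

Lemma wedge_mono A B : mono C A /\\ mono C B =
  (if [disjoint A & B] then shuffle_sign C A B else 0) *f mono C (A :|: B).
Proof.
apply/ffunP => S; rewrite wedgeE scalefE monoE big_mkcond (bigD1 A) //= big1 ?addr0.
  rewrite !monoE eqxx mulr1; case: ifP => [sAS|nAS]; last first.
    case: ifP => _; rewrite ?mul0r //.
    have /negbTE -> : S != A :|: B by apply: (contraFneq _ nAS) => ->; rewrite subsetUl.
    by rewrite mulr0.
  have dA : [disjoint A & S :\: A] by rewrite -setI_eq0 setDE setICA setICr setI0.
  have AUS : A :|: (S :\: A) = S by rewrite setDE setUIr setUCr setIT; apply/setUidPr.
  case: (eqVneq (S :\: A) B) => [<-|nSAB]; first by rewrite dA AUS eqxx mulr1.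
  rewrite mulr0; case: ifP => dAB; rewrite ?mul0r //.
  rewrite (_ : (S == A :|: B) = false) ?mulr0 //.
  apply/negbTE; apply: (contraNneq _ nSAB) => ->; apply/eqP.
  by rewrite setDUl setDv set0U; apply/setDidPl; rewrite disjoint_sym.
by move=> D nDA; rewrite monoE (negbTE nDA) mulr0 mul0r; case: ifP.
Qed.

Lemma wedge_mono_sorted A B :
  (forall a b, a \in A -> b \in B -> (a < b)%N) -> mono C A /\\ mono C B = mono C (A :|: B).
Proof.
move=> ltAB; have dAB : [disjoint A & B].
  rewrite -setI_eq0; apply/eqP/setP => a; rewrite !inE; apply/negbTE/andP => -[aA aB].
  by have := ltAB _ _ aA aB; rewrite ltnn.
rewrite wedge_mono dAB shuffle_signE.
have -> : inversions A B = set0.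
  apply/setP => p; rewrite !inE; apply/negbTE/negP => /and3P[p1 p2 lt21].
  by move: (ltn_trans lt21 (ltAB _ _ p1 p2)); rewrite ltnn.
by rewrite cards0 expr0 scale1f.
Qed.

Lemma mono_neq0 S : mono C S != 0.
Proof. by apply/eqP => /ffunP/(_ S); rewrite !ffunE eqxx => /eqP; rewrite oner_eq0. Qed.

Lemma wedge_monoA A B D :
  (mono C A /\\ mono C B) /\\ mono C D = mono C A /\\ (mono C B /\\ mono C D).
Proof.
rewrite wedge_mono wedgeZl wedge_mono scalefA wedge_mono wedgeZr wedge_mono scalefA setUA.
congr (_ *f _); rewrite -!setI_eq0 setIUl setIUr !setU_eq0 !setI_eq0.
case dAB: [disjoint A & B]; case dAD: [disjoint A & D]; case dBD: [disjoint B & D];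
  rewrite /= ?mul0r ?mulr0 //.
by rewrite shuffle_signUl // shuffle_signUr //; ring.
Qed.

Lemma wedgeA f g h : (f /\\ g) /\\ h = f /\\ (g /\\ h).
Proof.
have monoA2 A B : (mono C A /\\ mono C B) /\\ h = mono C A /\\ (mono C B /\\ h).
  rewrite [h]form_expand !wedge_sumr; apply: eq_bigr => D _.
  by rewrite !wedgeZr wedge_monoA.
have monoA1 A : (mono C A /\\ g) /\\ h = mono C A /\\ (g /\\ h).
  rewrite [g]form_expand wedge_sumr wedge_suml wedge_suml wedge_sumr.
  by apply: eq_bigr => B _; rewrite wedgeZr wedgeZl monoA2 wedgeZl wedgeZr.
rewrite [f]form_expand !wedge_suml; apply: eq_bigr => A _.
by rewrite !wedgeZl monoA1.
Qed.

Definition homogeneous (p : nat) f := forall S, #|S| != p -> f S = 0.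

Lemma homogeneous_mono S : homogeneous #|S| (mono C S).
Proof. by move=> T nT; rewrite monoE; case: eqP => // eTS; rewrite eTS eqxx in nT. Qed.
Lemma homogeneousD p f g : homogeneous p f -> homogeneous p g -> homogeneous p (f + g).
Proof. by move=> hf hg S nS; rewrite ffunE hf // hg // addr0. Qed.
Lemma homogeneousN p f : homogeneous p f -> homogeneous p (- f).
Proof. by move=> hf S nS; rewrite ffunE hf // oppr0. Qed.
Lemma homogeneousZ p c f : homogeneous p f -> homogeneous p (c *f f).
Proof. by move=> hf S nS; rewrite scalefE hf // mulr0. Qed.
Lemma homogeneous_sum p I (r : seq I) (P : pred I) (F : I -> form C) :
  (forall i, P i -> homogeneous p (F i)) -> homogeneous p (\sum_(i <- r | P i) F i).
Proof.
move=> hF; elim/big_rec: _ => [S _|i f Pi hf]; first by rewrite ffunE.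
exact: homogeneousD (hF i Pi) hf.
Qed.
Lemma homogeneous_wedge p q f g :
  homogeneous p f -> homogeneous q g -> homogeneous (p + q) (f /\\ g).
Proof.
move=> hf hg S nS; rewrite wedgeE big1 // => A sAS.
case: (eqVneq #|A| p) => [eA|nA]; last by rewrite hf // mulr0 mul0r.
case: (eqVneq #|S :\: A| q) => [eB|nB]; last by rewrite hg // mulr0.
by move: nS; rewrite -eA -eB cardsDS // subnKC ?subset_leq_card ?eqxx.
Qed.

Lemma wedge_monoC A B :
  mono C A /\\ mono C B = (-1) ^+ (#|A| * #|B|) *f (mono C B /\\ mono C A).
Proof.
rewrite !wedge_mono scalefA [[disjoint B & A]]disjoint_sym setUC; congr (_ *f _).
case: ifP => dAB; last by rewrite mulr0.
rewrite -(shuffle_sign_swap dAB) -mulrA [shuffle_sign C B A]shuffle_signE.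
by rewrite -expr2 sqrr_sign mulr1.
Qed.

Lemma wedge_bilinear_expand f g : f /\\ g =
  \sum_(A : {set 'I_8}) \sum_(B : {set 'I_8}) (f A * g B) *f (mono C A /\\ mono C B).
Proof.
rewrite {1}[f]form_expand {1}[g]form_expand wedge_suml; apply: eq_bigr => A _.
rewrite wedgeZl wedge_sumr scalef_sumr; apply: eq_bigr => B _.
by rewrite wedgeZr scalefA.
Qed.

Lemma wedgeC p q f g : homogeneous p f -> homogeneous q g ->
  f /\\ g = (-1) ^+ (p * q) *f (g /\\ f).
Proof.
move=> hf hg; rewrite wedge_bilinear_expand [in RHS]wedge_bilinear_expand [in RHS]exchange_big.
rewrite scalef_sumr; apply: eq_bigr => A _; rewrite scalef_sumr; apply: eq_bigr => B _.
case: (eqVneq #|A| p) => [<-|nA]; last by rewrite hf // mul0r mulr0 !scale0f scalef0.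
case: (eqVneq #|B| q) => [<-|nB]; last by rewrite hg // mul0r mulr0 !scale0f scalef0.
by rewrite wedge_monoC !scalefA; congr (_ *f _); ring.
Qed.

Lemma wedgeC2 f g : homogeneous 2 f -> homogeneous 2 g -> f /\\ g = g /\\ f.
Proof. by move=> hf hg; rewrite (wedgeC hf hg) -signr_odd /= expr0 scale1f. Qed.

Lemma wedge_anticomm u v : homogeneous 1 u -> homogeneous 1 v -> u /\\ v = - (v /\\ u).
Proof. by move=> hu hv; rewrite (wedgeC hu hv) expr1 scaleNf scale1f. Qed.

(* The one place where 2 != 0 in C is needed. *)
Lemma wedge_self u : homogeneous 1 u -> u /\\ u = 0.
Proof.
move=> hu; move: (u /\\ u) (wedge_anticomm hu hu) => w /ffunP E.
apply/ffunP => S; move: (E S); rewrite !ffunE => /eqP.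
by rewrite -subr_eq0 opprK -mulr2n mulrn_eq0 => /eqP.
Qed.

Lemma wedge_swap_middle k l f g h1 h2 : homogeneous k g -> homogeneous l h1 ->
  (f /\\ g) /\\ (h1 /\\ h2) = (-1) ^+ (k * l) *f ((f /\\ h1) /\\ (g /\\ h2)).
Proof.
move=> hg hh; rewrite wedgeA -(wedgeA g) (wedgeC hg hh) wedgeZl wedgeZr.
by rewrite !wedgeA.
Qed.

End ExteriorAlgebra.

Section RepeatedFactors.
Variable C : numDomainType.
Implicit Types (f u v w : form C).

Lemma wedge_self_r f u : homogeneous 1 u -> (f /\\ u) /\\ u = 0.
Proof. by move=> hu; rewrite wedgeA wedge_self // wedge0r. Qed.

Lemma wedge_swap_r f u v : homogeneous 1 u -> homogeneous 1 v ->
  (f /\\ u) /\\ v = - ((f /\\ v) /\\ u).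
Proof. by move=> hu hv; rewrite !wedgeA (wedge_anticomm hu hv) wedgeNr. Qed.

Lemma wedge_self_r2 f u v : homogeneous 1 u -> homogeneous 1 v ->
  ((f /\\ u) /\\ v) /\\ u = 0.
Proof. by move=> hu hv; rewrite (wedge_swap_r _ hv hu) wedge_self_r // wedge0l oppr0. Qed.

Lemma wedge_self_l u v : homogeneous 1 u -> homogeneous 1 v -> (u /\\ v) /\\ u = 0.
Proof. by move=> hu hv; rewrite (wedge_anticomm hu hv) wedgeNl wedge_self_r // oppr0. Qed.

Lemma wedge_self_l2 u v w : homogeneous 1 u -> homogeneous 1 v -> homogeneous 1 w ->
  ((u /\\ v) /\\ w) /\\ u = 0.
Proof. by move=> hu hv hw; rewrite (wedge_swap_r _ hw hu) wedge_self_l // wedge0l oppr0. Qed.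

End RepeatedFactors.

Definition comb (C : numDomainType) (u : 'I_4 -> form C) (x : 'I_4 -> C) : form C :=
  \sum_(k < 4) x k *f u k.

Definition vol4 (C : numDomainType) (u : 'I_4 -> form C) : form C :=
  ((u 0 /\\ u 1) /\\ u 2) /\\ u 3.

(* Omega u j is the 2-form Omega_(j+1) of alpha_a, built on the four 1-forms u. *)
Definition Omega (C : numDomainType) (u : 'I_4 -> form C) (j : nat) : form C :=
  match j with
  | 0 => u 0 /\\ u 1
  | 1 => u 0 /\\ u 2
  | 2 => u 0 /\\ u 3
  | 3 => u 1 /\\ u 2
  | 4 => - (u 1 /\\ u 3)
  | _ => u 2 /\\ u 3
  end.
Arguments Omega {C} u j%_N.

Definition minor (C : numDomainType) (x y : 'I_4 -> C) (k l : 'I_4) : C :=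
  x k * y l - x l * y k.

(* The coefficient of comb u x /\ comb u y on Omega u (5 - j), so that
   Omega u j /\ comb u x /\ comb u y = plucker x y j *f vol4 u. *)
Definition plucker (C : numDomainType) (x y : 'I_4 -> C) (j : nat) : C :=
  match j with
  | 0 => minor x y 2 3
  | 1 => - minor x y 1 3
  | 2 => minor x y 1 2
  | 3 => minor x y 0 3
  | 4 => minor x y 0 2
  | _ => minor x y 0 1
  end.
Arguments plucker {C} x y j%_N.

(* Laplace expansion of the determinant along its first two rows. *)
Definition det4 (C : numDomainType) (a b c d : 'I_4 -> C) : C :=
  plucker a b 5 * plucker c d 0 + plucker a b 4 * plucker c d 1
  + plucker a b 3 * plucker c d 2 + plucker a b 2 * plucker c d 3
  + plucker a b 1 * plucker c d 4 + plucker a b 0 * plucker c d 5.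

(* Wedge products are abstracted first, since [ffunE] would otherwise unfold them. *)
Ltac form_ring :=
  repeat match goal with
  | |- context [?f /\\ ?g] => move: (f /\\ g) => ?
  | |- context [vol4 ?u] => move: (vol4 u) => ?
  | |- context [Omega ?u ?j] => move: (Omega u j) => ?
  end;
  apply/ffunP => ?; rewrite !ffunE; ring.

Section FourOneForms.
Variable C : numDomainType.
Variable u : 'I_4 -> form C.
Hypothesis hu : forall k, homogeneous 1 (u k).
Implicit Types (x y : 'I_4 -> C).

Lemma comb4E x : comb u x = x 0 *f u 0 + x 1 *f u 1 + x 2 *f u 2 + x 3 *f u 3.
Proof.
rewrite /comb !big_ord_recl big_ord0 addr0 !addrA.
by congr (x _ *f u _ + x _ *f u _ + x _ *f u _ + x _ *f u _); apply/val_inj.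
Qed.

Lemma homogeneous_comb x : homogeneous 1 (comb u x).
Proof. by apply: homogeneous_sum => k _; apply/homogeneousZ/hu. Qed.

Lemma homogeneous_Omega j : homogeneous 2 (Omega u j).
Proof.
have h2 k l : homogeneous 2 (u k /\\ u l) := homogeneous_wedge (hu k) (hu l).
by case: j => [|[|[|[|[|j]]]]] //=; apply: homogeneousN.
Qed.

Lemma comb_wedge x y : comb u x /\\ comb u y =
  plucker x y 5 *f Omega u 0 + plucker x y 4 *f Omega u 1 + plucker x y 3 *f Omega u 2
  + plucker x y 2 *f Omega u 3 + plucker x y 1 *f Omega u 4 + plucker x y 0 *f Omega u 5.
Proof.
rewrite !comb4E !(wedgeDl, wedgeDr, wedgeZl, wedgeZr) !wedge_self //.
rewrite !(wedge_anticomm (hu 1) (hu 0)) !(wedge_anticomm (hu 2) (hu 0)).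
rewrite !(wedge_anticomm (hu 3) (hu 0)) !(wedge_anticomm (hu 2) (hu 1)).
rewrite !(wedge_anticomm (hu 3) (hu 1)) !(wedge_anticomm (hu 3) (hu 2)).
by rewrite /plucker /minor /=; form_ring.
Qed.

Lemma Omega_wedge_Omega j k : (j < 6)%N -> (k < 6)%N ->
  Omega u j /\\ Omega u k = (j + k == 5)%N%:R *f vol4 u.
Proof.
wlog le_jk : j k / (j <= k)%N => [hwlog hj hk|].
  case: (leqP j k) => [|/ltnW] hjk; first exact: hwlog.
  by rewrite addnC -hwlog // wedgeC2 //; apply: homogeneous_Omega.
(* Unless j + k = 5, the two 2-forms share a factor u k. *)
have kill1 f k : (f /\\ u k) /\\ u k = 0 := wedge_self_r f (hu k).
have kill2 f k l : ((f /\\ u k) /\\ u l) /\\ u k = 0 := wedge_self_r2 f (hu k) (hu l).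
have kill3 k l : (u k /\\ u l) /\\ u k = 0 := wedge_self_l (hu k) (hu l).
have kill4 k l m : ((u k /\\ u l) /\\ u m) /\\ u k = 0 := wedge_self_l2 (hu k) (hu l) (hu m).
case: j le_jk => [|[|[|[|[|[|j]]]]]]; case: k => [|[|[|[|[|[|k]]]]]] //= _ _ _;
  rewrite ?wedgeNl ?wedgeNr -?wedgeA ?kill1 ?kill2 ?kill3 ?kill4;
  rewrite ?wedge0l ?oppr0 ?scale0f ?scale1f //.
- by rewrite (wedge_swap_r _ (hu 2) (hu 1)) wedgeNl opprK.
- by rewrite (wedge_swap_r _ (hu 3) (hu 1)) wedgeNl (wedge_swap_r _ (hu 3) (hu 2)) opprK.
Qed.

Lemma Omega_wedge_comb j x y : (j < 6)%N ->
  Omega u j /\\ (comb u x /\\ comb u y) = plucker x y j *f vol4 u.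
Proof.
move=> hj; rewrite comb_wedge !(wedgeDr, wedgeZr) !Omega_wedge_Omega //.
by case: j hj => [|[|[|[|[|[|j]]]]]] //= _; form_ring.
Qed.

Lemma vol4_comb (M : 'I_4 -> 'I_4 -> C) :
  vol4 (fun i => comb u (M i)) = det4 (M 0) (M 1) (M 2) (M 3) *f vol4 u.
Proof.
rewrite /vol4 wedgeA comb_wedge !(wedgeDl, wedgeZl) !Omega_wedge_comb //.
by rewrite -/(vol4 u) /det4; form_ring.
Qed.

End FourOneForms.

Lemma eq_vol4 (C : numDomainType) (u v : 'I_4 -> form C) : u =1 v -> vol4 u = vol4 v.
Proof. by move=> uv; rewrite /vol4 !uv. Qed.

Lemma plucker_relation (C : numDomainType) (x y : 'I_4 -> C) :
  plucker x y 0 * plucker x y 5 + plucker x y 1 * plucker x y 4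
  + plucker x y 2 * plucker x y 3 = 0.
Proof. by rewrite /plucker /minor; ring. Qed.

Lemma plucker_conj (C : numClosedFieldType) (x y : 'I_4 -> C) j :
  plucker (fun k => (x k)^*) (fun k => (y k)^*) j = (plucker x y j)^*.
Proof. by case: j => [|[|[|[|[|j]]]]]; rewrite /= /minor !(rmorphN, rmorphB, rmorphM). Qed.

Lemma det4_conj (C : numClosedFieldType) (a b c d : 'I_4 -> C) :
  det4 (fun k => (a k)^*) (fun k => (b k)^*) (fun k => (c k)^*) (fun k => (d k)^*)
  = (det4 a b c d)^*.
Proof. by rewrite /det4 !plucker_conj !(rmorphD, rmorphM). Qed.

Section Volume.
Variable C : numClosedFieldType.

Lemma homogeneous_dz k : homogeneous 1 (dz C k).
Proof. by have := @homogeneous_mono C [set (inord k : 'I_8)]; rewrite cards1. Qed.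
Lemma homogeneous_dzb k : homogeneous 1 (dzb C k).
Proof. by have := @homogeneous_mono C [set (inord (k + 4) : 'I_8)]; rewrite cards1. Qed.

Lemma volume_split : volume C = vol4 (dz C) /\\ vol4 (dzb C).
Proof.
have hdzb2 := homogeneous_wedge (homogeneous_dzb 0) (homogeneous_dzb 1).
have hdzb3 := homogeneous_wedge hdzb2 (homogeneous_dzb 2).
rewrite /volume /idzdzb !(wedgeZl, wedgeZr) !scalefA.
rewrite (wedge_swap_middle _ _ (homogeneous_dzb 0) (homogeneous_dz 1)) !(wedgeZl, scalefA).
rewrite (wedge_swap_middle _ _ hdzb2 (homogeneous_dz 2)) !(wedgeZl, scalefA).
rewrite (wedge_swap_middle _ _ hdzb3 (homogeneous_dz 3)) scalefA.
rewrite -[RHS]scale1f; congr (_ *f _).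
have i2 : 'i * 'i = -1 :> C by rewrite -expr2 sqrCi.
by rewrite i2 mulN1r mulNr i2 opprK mul1r -!exprD -signr_odd.
Qed.

Lemma volume_neq0 : volume C != 0.
Proof.
rewrite volume_split /vol4 /dz /dzb !wedge_mono_sorted.
  exact: mono_neq0.
all: by move=> a b; rewrite !inE -!val_eqE /= !inordK //; lia.
Qed.

End Volume.

(* alpha_a with independent families u, v in place of omega, conj omega. *)
Definition alpha_gen (C : numDomainType) (u v : 'I_4 -> form C) (a b : C) : form C :=
  \sum_(j < 6) (Omega u j /\\ Omega v j)
  + a *f (Omega u 0 /\\ Omega v 5) + b *f (Omega u 5 /\\ Omega v 0).

Definition qform (C : numDomainType) (a b : C) (p q : nat -> C) : C :=
  \sum_(j < 6) p j * q j + a * (p 0%N * q 5%N) + b * (p 5%N * q 0%N).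

Section AlphaWedge.
Variable C : numClosedFieldType.
Implicit Types (f g h : form C).

Lemma wedge_i_pairs g1 h1 g2 h2 : homogeneous 1 h1 -> homogeneous 1 g2 ->
  ('i *f (g1 /\\ h1)) /\\ ('i *f (g2 /\\ h2)) = (g1 /\\ g2) /\\ (h1 /\\ h2).
Proof.
move=> hh hg; rewrite wedgeZl wedgeZr scalefA (wedge_swap_middle _ _ hh hg) scalefA.
by rewrite -expr2 sqrCi mulrNN mulr1 scale1f.
Qed.

Variables u v : 'I_4 -> form C.
Hypotheses (hu : forall k, homogeneous 1 (u k)) (hv : forall k, homogeneous 1 (v k)).

Lemma alpha_wedge a b x y z t :
  (alpha_gen u v a b /\\ ('i *f (comb u x /\\ comb v z))) /\\ ('i *f (comb u y /\\ comb v t))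
  = qform a b (plucker x y) (plucker z t) *f (vol4 u /\\ vol4 v).
Proof.
rewrite wedgeA (wedge_i_pairs _ _ (homogeneous_comb hv z) (homogeneous_comb hu y)).
have hP := homogeneous_wedge (homogeneous_comb hu x) (homogeneous_comb hu y).
have pair j k : (j < 6)%N -> (k < 6)%N ->
    (Omega u j /\\ Omega v k) /\\ ((comb u x /\\ comb u y) /\\ (comb v z /\\ comb v t)) =
    (plucker x y j * plucker z t k) *f (vol4 u /\\ vol4 v).
  move=> hj hk; rewrite (wedge_swap_middle _ _ (homogeneous_Omega hv k) hP).
  rewrite -signr_odd /= expr0 scale1f !Omega_wedge_comb //.
  by rewrite wedgeZl wedgeZr scalefA mulrC.
rewrite /alpha_gen !wedgeDl !wedgeZl wedge_suml !pair //.
rewrite (eq_bigr _ (fun (j : 'I_6) _ => pair j j (ltn_ord j) (ltn_ord j))) -scalef_suml.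
by rewrite !scalefA -!scalefDl.
Qed.

End AlphaWedge.

Lemma lerN_add_conj (C : numClosedFieldType) (z : C) : - (z + z^*) <= `|z| *+ 2.
Proof.
have zr : z + z^* \is Num.real by rewrite CrealE rmorphD /= conjCK addrC.
have le_norm : - (z + z^*) <= `|- (z + z^*)| by apply: real_ler_norm; rewrite rpredN.
by apply: (le_trans le_norm); rewrite normrN mulr2n -{2}(norm_conjC z) ler_normD.
Qed.

Lemma norm_plucker_le (C : numDomainType) (p : nat -> C) :
  p 0%N * p 5%N + p 1%N * p 4%N + p 2%N * p 3%N = 0 ->
  `|p 0%N| * `|p 5%N| <= `|p 1%N| * `|p 4%N| + `|p 2%N| * `|p 3%N|.
Proof.
move=> rel; rewrite -!normrM.
have -> : p 0%N * p 5%N = - (p 1%N * p 4%N + p 2%N * p 3%N).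
  by apply/eqP; rewrite -addr_eq0 addrA rel.
by rewrite normrN ler_normD.
Qed.

Lemma qform_ge0 (C : numClosedFieldType) (a : C) (p q : nat -> C) :
  `|a| <= 2 -> (forall j, q j = (p j)^*) ->
  p 0%N * p 5%N + p 1%N * p 4%N + p 2%N * p 3%N = 0 -> 0 <= qform a a^* p q.
Proof.
move=> ha qE rel.
rewrite /qform !big_ord_recl big_ord0 addr0 /= /bump /= !addn0 !add1n !qE.
set z := a * _; have -> : a^* * (p 5%N * (p 0%N)^*) = z^*.
  by rewrite /z !rmorphM /= conjCK [p 5%N * _]mulrC.
rewrite -!normCK -addrA -[z + z^*]opprK subr_ge0; apply: (le_trans (lerN_add_conj z)).
have z_le : `|z| <= 2 * (`|p 0%N| * `|p 5%N|).
  by rewrite /z !normrM norm_conjC ler_wpM2r ?mulr_ge0.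
have amgm j k : `|p j| * `|p k| *+ 2 <= `|p j| ^+ 2 + `|p k| ^+ 2.
  exact: real_leif_mean_square_scaled (normr_real _) (normr_real _).
have -> : `|p 0%N| ^+ 2 + (`|p 1%N| ^+ 2 + (`|p 2%N| ^+ 2 + (`|p 3%N| ^+ 2
    + (`|p 4%N| ^+ 2 + `|p 5%N| ^+ 2)))) = (`|p 0%N| ^+ 2 + `|p 5%N| ^+ 2)
    + ((`|p 1%N| ^+ 2 + `|p 4%N| ^+ 2) + (`|p 2%N| ^+ 2 + `|p 3%N| ^+ 2)) by ring.
apply: le_trans (lerD (amgm 0%N 5%N) (lerD (amgm 1%N 4%N) (amgm 2%N 3%N))).
rewrite -!mulrnDl lerMn2r /=; apply: (le_trans z_le).
by rewrite mulr_natl mulr2n lerD2l norm_plucker_le.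
Qed.

Section HolomorphicForms.
Variable C : numClosedFieldType.
Implicit Types (v x y : 'rV[C]_4) (w : 'M[C]_4).

Lemma homogeneous_hol v : homogeneous 1 (hol v).
Proof. exact: (homogeneous_comb (@homogeneous_dz C)). Qed.
Lemma homogeneous_ahol v : homogeneous 1 (ahol v).
Proof. exact: (homogeneous_comb (@homogeneous_dzb C)). Qed.

Lemma hol_mulmx x w : hol (x *m w) = comb (fun k => hol (row k w)) (x 0).
Proof.
apply/ffunP => S; rewrite /comb /hol !sum_ffunE.
under eq_bigr => j _ do rewrite scalefE !mxE mulr_suml.
rewrite exchange_big; apply: eq_bigr => k _; rewrite scalefE sum_ffunE mulr_sumr.
by apply: eq_bigr => j _; rewrite scalefE !mxE mulrA.
Qed.

Lemma ahol_mulmx x w : ahol (x *m w) = comb (fun k => ahol (row k w)) (fun k => (x 0 k)^*).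
Proof.
apply/ffunP => S; rewrite /comb /ahol !sum_ffunE.
under eq_bigr => j _ do rewrite scalefE !mxE rmorph_sum mulr_suml.
rewrite exchange_big; apply: eq_bigr => k _; rewrite scalefE sum_ffunE mulr_sumr.
by apply: eq_bigr => j _; rewrite scalefE !mxE rmorphM mulrA.
Qed.

Lemma hol_row1mx k : hol (row k 1%:M) = dz C k.
Proof.
rewrite /hol (bigD1 k) //= big1 ?addr0; first by rewrite !mxE eqxx scale1f.
by move=> l /negbTE nlk; rewrite !mxE eq_sym nlk scale0f.
Qed.

Lemma vol4_hol_rows w :
  vol4 (fun k => hol (row k w)) = det4 (w 0) (w 1) (w 2) (w 3) *f vol4 (dz C).
Proof.
rewrite -(vol4_comb (@homogeneous_dz C) w); apply: eq_vol4 => k.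
by apply: eq_bigr => l _; rewrite mxE.
Qed.

Lemma vol4_ahol_rows w :
  vol4 (fun k => ahol (row k w)) = (det4 (w 0) (w 1) (w 2) (w 3))^* *f vol4 (dzb C).
Proof.
rewrite -det4_conj -(vol4_comb (@homogeneous_dzb C) (fun k l => (w k l)^*)).
by apply: eq_vol4 => k; apply: eq_bigr => l _; rewrite mxE.
Qed.

(* From w^-1 w = 1: vol4 dz = det4 (rows of w^-1) * det4 (rows of w) * vol4 dz,
   and vol4 dz != 0. *)
Lemma det4_rows_neq0 w : w \in unitmx -> det4 (w 0) (w 1) (w 2) (w 3) != 0.
Proof.
move=> w_unit; apply: contra (volume_neq0 C) => /eqP det0.
have inv_rows : vol4 (dz C) = vol4 (fun k => comb (fun l => hol (row l w)) (invmx w k)).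
  apply: eq_vol4 => k; rewrite -hol_row1mx -(mulVmx w_unit) row_mul hol_mulmx.
  by apply: eq_bigr => l _; rewrite mxE.
rewrite volume_split inv_rows (vol4_comb (fun k => homogeneous_hol (row k w))).
by rewrite vol4_hol_rows det0 scale0f scalef0 wedge0l.
Qed.

Lemma alpha_gen_hol_wedge w a x y :
  (alpha_gen (fun k => hol (row k w)) (fun k => ahol (row k w)) a a^*
     /\\ ('i *f (hol (x *m w) /\\ ahol (x *m w))))
     /\\ ('i *f (hol (y *m w) /\\ ahol (y *m w)))
  = (qform a a^* (plucker (x 0) (y 0)) (plucker (fun k => (x 0 k)^*) (fun k => (y 0 k)^*))
     * `|det4 (w 0) (w 1) (w 2) (w 3)| ^+ 2) *f volume C.
Proof.
rewrite !hol_mulmx !ahol_mulmx.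
rewrite (alpha_wedge (fun k => homogeneous_hol (row k w)) (fun k => homogeneous_ahol (row k w))).
rewrite vol4_hol_rows vol4_ahol_rows wedgeZl wedgeZr !scalefA -volume_split normCK.
by rewrite mulrA.
Qed.

End HolomorphicForms.

Lemma qform_witness (C : numClosedFieldType) (a : C) : exists x y : 'rV[C]_4,
  qform a a^* (plucker (x 0) (y 0)) (plucker (fun k => (x 0 k)^*) (fun k => (y 0 k)^*))
  = 8 - `|a| ^+ 2 *+ 2.
Proof.
exists (\row_k [:: 2; 0; - a^*; 0]`_k), (\row_k [:: 0; 1; 0; 1]`_k).
rewrite /qform !big_ord_recl big_ord0 /= /bump /= ?addn0 ?add1n /plucker /minor !mxE /=.
by rewrite !(rmorphN, conjCK, conjC0, conjC1, rmorph_nat) normCK; ring.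
Qed.

Theorem positive22_alpha_gen (C : numClosedFieldType) (w : 'M[C]_4) (a : C) :
  w \in unitmx ->
  positive22 (alpha_gen (fun k => hol (row k w)) (fun k => ahol (row k w)) a a^*)
  <-> `|a| <= 2.
Proof.
move=> w_unit; split=> [pos | le_a2 g1 g2]; last first.
  rewrite -[g1](mulmxKV w_unit) -[g2](mulmxKV w_unit) alpha_gen_hol_wedge.
  eexists; split; last reflexivity.
  apply: mulr_ge0 (exprn_ge0 _ (normr_ge0 _)).
  exact: qform_ge0 le_a2 (plucker_conj _ _) (plucker_relation _ _).
rewrite real_leNgt ?normr_real ?realn //; apply/negP => lt2a.
have [x [y qxy]] := qform_witness a.
have [c [c_ge0]] := pos (x *m w) (y *m w).
rewrite alpha_gen_hol_wedge qxy => /(scalef_injl (volume_neq0 C)) qc.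
have sq_lt : 2 ^+ 2 *+ 2 < `|a| ^+ 2 *+ 2 :> C by rewrite ltrMn2r (ltrXn2r 2 (ler0n _ 2) lt2a).
have : c < 0.
  rewrite -qc pmulr_llt0 ?exprn_gt0 ?normr_gt0 ?det4_rows_neq0 // subr_lt0.
  by rewrite (_ : 8 = 2 ^+ 2 *+ 2) //; ring.
by move/(le_lt_trans c_ge0); rewrite ltxx.
Qed.

(* [alpha_a w a] unfolds to [alpha_gen] on the rows of [w] and their conjugates. *)
Theorem proposition4 (R : realType) (w : 'M[R[i]]_4) (a : R[i]) :
  w \in unitmx ->
  (positive22 (alpha_a w a) <-> `|a| <= 2).
Proof. exact: positive22_alpha_gen. Qed.
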